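(* For all $n\ge2$ and all $x,y\in\mathbb{B}^n$, $$\frac{1}{\sqrt2}\,\mathrm{th}\frac{\rho_{\mathbb{B}^n}(x,y)}{2}\le b_{\mathbb{B}^n,2}(x,y)\le\sqrt2\,\mathrm{th}\frac{\rho_{\mathbb{B}^n}(x,y)}{2},$$ and the constants $1/\sqrt2$ and $\sqrt2$ are the best possible.
   Context: $\mathbb{B}^n$ is the unit ball of $\mathbb{R}^n$. The hyperbolic metric of the unit ball satisfies $\mathrm{th}\frac{\rho_{\mathbb{B}^n}(x,y)}{2}=\frac{|x-y|}{\sqrt{|x-y|^2+(1-|x|^2)(1-|y|^2)}}$. For a domain $G\subsetneq\mathbb{R}^n$ and $p\ge1$, the Barrlund metric is $b_{G,p}(x,y)=\sup_{z\in\partial G}\frac{|x-y|}{(|x-z|^p+|z-y|^p)^{1/p}}$. *)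

From mathcomp Require Import all_boot all_order all_algebra.
From mathcomp Require Import all_classical all_reals all_analysis.
Set Implicit Arguments. Unset Strict Implicit. Unset Printing Implicit Defensive.
Import Order.TTheory GRing.Theory Num.Theory.
Local Open Scope ring_scope.
Local Open Scope classical_set_scope.

Definition enorm (R : realType) (n : nat) (x : 'rV[R]_n) : R :=
  Num.sqrt (\sum_(i < n) x ord0 i ^+ 2).

Definition unit_ball (R : realType) (n : nat) : set 'rV[R]_n :=
  [set x | enorm x < 1].
Definition unit_sphere (R : realType) (n : nat) : set 'rV[R]_n :=
  [set z | enorm z = 1].

(* th (rho_{B^n}(x,y) / 2), given by the explicit formula of the context. *)
Definition th_half_rho_ball (R : realType) (n : nat) (x y : 'rV[R]_n) : R :=
  enorm (x - y) /
  Num.sqrt (enorm (x - y) ^+ 2 + (1 - enorm x ^+ 2) * (1 - enorm y ^+ 2)).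

Definition barrlund (R : realType) (n : nat) (bdry : set 'rV[R]_n) (p : R)
  (x y : 'rV[R]_n) : R :=
  sup [set enorm (x - y) /
           powR (powR (enorm (x - z)) p + powR (enorm (z - y)) p) p^-1
      | z in bdry].

(* Write a = |x|, b = |y|, s = |x+y|, d = |x-y|, so that th(rho/2) = d / sqrt D
   with D = d^2 + (1-a^2)(1-b^2).  For z on the unit sphere,
     |x-z|^2 + |z-y|^2 = E + 2 (s - <x+y, z>),   E = a^2 + b^2 + 2 - 2s,
   and the slack s - <x+y,z> is nonnegative (Cauchy-Schwarz) and vanishes for
   z = (x+y)/s; hence b_{B^n,2}(x,y) = d / sqrt E = sqrt (D/E) * th(rho/2).
   The theorem is thus a statement about the ratio D/E:
   - by the parallelogram law d^2 = 2a^2 + 2b^2 - s^2, and two polynomial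
     inequalities in a, b < 1 and 0 <= s <= a+b give E <= 2D and D <= 2E;
   - in the plane spanned by two coordinate vectors e, f, the pair
     x = t e, y = 0 has D/E = 1/(1+(1-t)^2), and the pair x = (1-u) e + u f,
     y = (1-u) e - u f has D/E = 1+(1-u)^2; letting t, u -> 0 shows that
     1/sqrt 2 and sqrt 2 are sharp (this is where n >= 2 is used). *)

From mathcomp Require Import all_boot all_order all_algebra.
From mathcomp Require Import all_classical all_reals all_analysis.
From mathcomp Require Import ring lra.
Import Order.TTheory GRing.Theory Num.Theory.
Local Open Scope ring_scope.
Local Open Scope classical_set_scope.
Set Implicit Arguments.
Unset Strict Implicit.

Lemma sup_attained (R : realType) (S : set R) (m : R) :
  S m -> ubound S m -> sup S = m.
Proof.
move=> Sm ubm; apply/le_anti/andP; split; first by apply: ge_sup => //; exists m.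
by apply: ub_le_sup => //; exists m.
Qed.

Section Euclidean.
Variables (R : realType) (n : nat).
Implicit Types (x y z w : 'rV[R]_n).

Definition dot x y : R := \sum_(i < n) x ord0 i * y ord0 i.

Lemma dotC x y : dot x y = dot y x.
Proof. by apply: eq_bigr => i _; rewrite mulrC. Qed.

Lemma dotDl x y z : dot (x + y) z = dot x z + dot y z.
Proof. by rewrite /dot -big_split; apply: eq_bigr => i _; rewrite !mxE mulrDl. Qed.

Lemma dotBl x y z : dot (x - y) z = dot x z - dot y z.
Proof. by rewrite /dot -sumrB; apply: eq_bigr => i _; rewrite !mxE mulrBl. Qed.

Lemma dotZl (c : R) x z : dot (c *: x) z = c * dot x z.
Proof. by rewrite /dot mulr_sumr; apply: eq_bigr => i _; rewrite !mxE mulrA. Qed.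

Lemma dotDr x y z : dot z (x + y) = dot z x + dot z y.
Proof. by rewrite dotC dotDl !(dotC z). Qed.

Lemma dotBr x y z : dot z (x - y) = dot z x - dot z y.
Proof. by rewrite dotC dotBl !(dotC z). Qed.

Lemma dotZr (c : R) x z : dot z (c *: x) = c * dot z x.
Proof. by rewrite dotC dotZl dotC. Qed.

Lemma dot_ge0 x : 0 <= dot x x.
Proof. by apply: sumr_ge0 => i _; rewrite -expr2 sqr_ge0. Qed.

Lemma dot_self_eq0 x : dot x x = 0 -> forall z, dot x z = 0.
Proof.
move=> /eqP; rewrite psumr_eq0 => [/allP x0 z|i _]; last by rewrite -expr2 sqr_ge0.
rewrite /dot big1 // => i _.
by move/(_ i (mem_index_enum _)): x0; rewrite /= mulf_eq0 orbb => /eqP ->; rewrite mul0r.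
Qed.

Lemma enorm_dot x : enorm x = Num.sqrt (dot x x).
Proof. by rewrite /enorm; congr Num.sqrt; apply: eq_bigr => i _; rewrite expr2. Qed.

Lemma enorm_ge0 x : 0 <= enorm x.
Proof. exact: sqrtr_ge0. Qed.

Lemma enorm_sq x : enorm x ^+ 2 = dot x x.
Proof. by rewrite enorm_dot sqr_sqrtr // dot_ge0. Qed.

Lemma cauchy_schwarz x y : dot x y <= enorm x * enorm y.
Proof.
have [ax0|ax_neq0] := eqVneq (enorm x) 0.
  by rewrite (dot_self_eq0 _ y) ?ax0 ?mul0r // -enorm_sq ax0 expr0n.
have [by0|by_neq0] := eqVneq (enorm y) 0.
  by rewrite dotC (dot_self_eq0 _ x) ?by0 ?mulr0 // -enorm_sq by0 expr0n.
have ab_gt0 : 0 < enorm x * enorm y.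
  by rewrite mulr_gt0 // lt0r ?ax_neq0 ?by_neq0 enorm_ge0.
(* expand |b x - a y|^2 >= 0 with a = |x|, b = |y| *)
have := dot_ge0 (enorm y *: x - enorm x *: y).
rewrite !(dotBl, dotBr, dotZl, dotZr) -!enorm_sq (dotC y x) => ?; nra.
Qed.

Lemma dot_le_unit w z : enorm z = 1 -> dot w z <= enorm w.
Proof. by move=> z1; have := cauchy_schwarz w z; rewrite z1 mulr1. Qed.

Lemma sqnorm_add x y : enorm (x + y) ^+ 2 = enorm x ^+ 2 + 2 * dot x y + enorm y ^+ 2.
Proof. by rewrite !enorm_sq !(dotDl, dotDr) (dotC y x); ring. Qed.

Lemma sqnorm_sub x y : enorm (x - y) ^+ 2 = enorm x ^+ 2 - 2 * dot x y + enorm y ^+ 2.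
Proof. by rewrite !enorm_sq !(dotBl, dotBr) (dotC y x); ring. Qed.

Lemma parallelogram x y :
  enorm (x - y) ^+ 2 = 2 * enorm x ^+ 2 + 2 * enorm y ^+ 2 - enorm (x + y) ^+ 2.
Proof. by rewrite sqnorm_sub sqnorm_add; ring. Qed.

Lemma triangle x y : enorm (x + y) <= enorm x + enorm y.
Proof.
have := cauchy_schwarz x y; have := sqnorm_add x y.
have := enorm_ge0 (x + y); have := enorm_ge0 x; have := enorm_ge0 y.
move=> *; nra.
Qed.

Lemma exists_unit_dot_norm (n_gt0 : (0 < n)%N) w :
  exists z, enorm z = 1 /\ dot w z = enorm w.
Proof.
have [w0|w_neq0] := eqVneq (enorm w) 0.
  pose e : 'rV[R]_n := delta_mx 0 (Ordinal n_gt0).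
  exists e; split; last by rewrite w0 dot_self_eq0 // -enorm_sq w0 expr0n.
  rewrite enorm_dot /dot (bigD1 (Ordinal n_gt0)) //= big1 ?addr0.
    by rewrite !mxE !eqxx mulr1 sqrtr1.
  by move=> i /negPf ne; rewrite !mxE ne mulr0.
exists ((enorm w)^-1 *: w); split; last by rewrite dotZr -enorm_sq; field.
rewrite enorm_dot dotZl dotZr -enorm_sq.
have -> : (enorm w)^-1 * ((enorm w)^-1 * enorm w ^+ 2) = 1 by field.
exact: sqrtr1.
Qed.

End Euclidean.

Section BallQuantities.
Variables (R : realType) (n : nat).
Implicit Types (x y z : 'rV[R]_n).

(* E(x,y) = min over the unit sphere of |x-z|^2 + |z-y|^2. *)
Definition sphere_energy x y : R :=
  enorm x ^+ 2 + enorm y ^+ 2 + 2 - 2 * enorm (x + y).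

(* D(x,y), the quantity with th(rho/2) = |x-y| / sqrt D. *)
Definition hyp_denom x y : R :=
  enorm (x - y) ^+ 2 + (1 - enorm x ^+ 2) * (1 - enorm y ^+ 2).

(* The ratio b_{B^n,2} / th(rho/2). *)
Definition barrlund_th_ratio x y : R :=
  Num.sqrt (hyp_denom x y / sphere_energy x y).

Lemma sphere_energy_gt0 x y : unit_ball x -> unit_ball y -> 0 < sphere_energy x y.
Proof.
rewrite /unit_ball /sphere_energy /= => hx hy.
have := triangle x y; have := enorm_ge0 x; have := enorm_ge0 y; move=> *; nra.
Qed.

Lemma hyp_denom_gt0 x y : unit_ball x -> unit_ball y -> 0 < hyp_denom x y.
Proof.
rewrite /unit_ball /hyp_denom /= => hx hy.
have : 0 < (1 - enorm x ^+ 2) * (1 - enorm y ^+ 2).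
  by apply: mulr_gt0; have := enorm_ge0 x; have := enorm_ge0 y; move=> *; nra.
by have := sqr_ge0 (enorm (x - y)); lra.
Qed.

Lemma th_half_rho_ball_gt0 x y : unit_ball x -> unit_ball y ->
  0 < enorm (x - y) -> 0 < th_half_rho_ball x y.
Proof.
by move=> hx hy dxy; rewrite divr_gt0 // sqrtr_gt0 hyp_denom_gt0.
Qed.

(* The Barrlund quotient at a sphere point z: E plus the Cauchy-Schwarz slack. *)
Lemma sum_sqdist_sphere x y z : enorm z = 1 ->
  enorm (x - z) ^+ 2 + enorm (z - y) ^+ 2
  = sphere_energy x y + 2 * (enorm (x + y) - dot (x + y) z).
Proof. by move=> z1; rewrite !sqnorm_sub z1 /sphere_energy dotDl (dotC z y); ring. Qed.

Lemma barrlund_ball2 (n_gt0 : (0 < n)%N) x y : unit_ball x -> unit_ball y ->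
  barrlund (@unit_sphere R n) 2 x y = enorm (x - y) / Num.sqrt (sphere_energy x y).
Proof.
move=> hx hy; have E_gt0 := sphere_energy_gt0 hx hy.
pose slack z := enorm (x + y) - dot (x + y) z.
have quotE z : unit_sphere z ->
    enorm (x - y) / powR (powR (enorm (x - z)) 2 + powR (enorm (z - y)) 2) 2^-1
    = enorm (x - y) / Num.sqrt (sphere_energy x y + 2 * slack z).
  move=> z1; rewrite !powR_mulrn ?enorm_ge0 // powR12_sqrt ?addr_ge0 ?sqr_ge0 //.
  by rewrite sum_sqdist_sphere.
apply: sup_attained.
  have [z0 [z0_1 z0_dot]] := exists_unit_dot_norm n_gt0 (x + y).
  by exists z0 => //; rewrite quotE // /slack z0_dot subrr mulr0 addr0.
move=> _ [z z1 <-]; rewrite quotE //.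
have slack_ge0 : 0 <= slack z by rewrite subr_ge0 dot_le_unit.
apply: ler_wpM2l; first exact: enorm_ge0.
have E_le : sphere_energy x y <= sphere_energy x y + 2 * slack z.
  by rewrite lerDl mulr_ge0.
have Ez_gt0 := lt_le_trans E_gt0 E_le.
by rewrite lef_pV2 ?posrE ?sqrtr_gt0 // ler_sqrt // ltW.
Qed.

Lemma barrlund_ball_th (n_gt0 : (0 < n)%N) x y : unit_ball x -> unit_ball y ->
  barrlund (@unit_sphere R n) 2 x y = barrlund_th_ratio x y * th_half_rho_ball x y.
Proof.
move=> hx hy; rewrite barrlund_ball2 // /barrlund_th_ratio /th_half_rho_ball.
have D_gt0 := hyp_denom_gt0 hx hy; have E_gt0 := sphere_energy_gt0 hx hy.
rewrite sqrtrM ?ltW // sqrtrV ?ltW // -/(hyp_denom x y).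
by field; rewrite !gt_eqF ?sqrtr_gt0.
Qed.

End BallQuantities.

Section RatioBounds.
Variable R : realType.
Implicit Types a b s : R.

(* E <= 2D, written in terms of a = |x|, b = |y|, s = |x+y| after eliminating
   d^2 = 2a^2 + 2b^2 - s^2.  The difference 2D - E is concave in s, so it lies
   above the chord through its values [at_zero] (s = 0) and [at_sum]
   (s = a + b), both nonnegative. *)
Lemma energy_le_twice_hyp a b s : 0 <= a -> a < 1 -> 0 <= b -> b < 1 ->
  0 <= s -> s <= a + b ->
  a^+2 + b^+2 + 2 - 2*s <= 2 * ((2*a^+2 + 2*b^+2 - s^+2) + (1 - a^+2) * (1 - b^+2)).
Proof.
move=> ha ha1 hb hb1 hs hsab.
have at_sum : 0 <= 2*(a+b) - (a+b)^+2 - 2*a*b + 2*a^+2*b^+2.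
  have p_ge0 : 0 <= (1-a)*(1-b) by apply: mulr_ge0; lra.
  have : 0 <= (1-a)*(1-b)*(2*a*b) by apply: mulr_ge0 => //; nra.
  have : 0 <= (1-a)*(1-b)*(1-(1-a)*(1-b)) by apply: mulr_ge0 => //; nra.
  have := sqr_ge0 (a - b); nra.
have at_zero : 0 <= a^+2 + b^+2 + 2*a^+2*b^+2 by nra.
have [ab0|ab_neq0] := eqVneq (a + b) 0.
  have a0 : a = 0 by lra.
  have b0 : b = 0 by lra.
  have s0 : s = 0 by lra.
  by rewrite a0 b0 s0; lra.
have ab_gt0 : 0 < a + b by rewrite lt0r ab_neq0 /=; lra.
have : 0 <= s * (2*(a+b) - (a+b)^+2 - 2*a*b + 2*a^+2*b^+2) by apply: mulr_ge0.
have : 0 <= (a+b-s) * (a^+2 + b^+2 + 2*a^+2*b^+2) by apply: mulr_ge0 => //; lra.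
have : 0 <= s * (a+b-s) by apply: mulr_ge0 => //; lra.
move=> *.
have : 0 <= (a+b) * (a^+2 + b^+2 - 2*s^+2 + 2*s + 2*a^+2*b^+2) by nra.
rewrite pmulr_rge0 //; nra.
Qed.

(* D <= 2E, in the same variables.  The difference 2E - D exceeds its value
   [at_sum] at s = a + b by (a+b-s)(4-s-(a+b)) >= 0. *)
Lemma hyp_le_twice_energy a b s : 0 <= a -> a < 1 -> 0 <= b -> b < 1 ->
  0 <= s -> s <= a + b ->
  (2*a^+2 + 2*b^+2 - s^+2) + (1 - a^+2) * (1 - b^+2) <= 2 * (a^+2 + b^+2 + 2 - 2*s).
Proof.
move=> ha ha1 hb hb1 hs hsab.
have at_sum : 0 <= 2*a^+2 + 2*b^+2 + 2*a*b + 3 - 4*a - 4*b - a^+2*b^+2.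
  have p_ge0 : 0 <= (1-a)*(1-b) by apply: mulr_ge0; lra.
  have : 0 <= (1-a)*(1-b)*(2*((1-a)+(1-b)) - (1-a)*(1-b)) by apply: mulr_ge0 => //; nra.
  have := sqr_ge0 (a - b); nra.
have : 0 <= (a+b-s)*(4-s-(a+b)) by apply: mulr_ge0; lra.
nra.
Qed.

End RatioBounds.

Lemma barrlund_th_ratio_bounds (R : realType) (n : nat) (x y : 'rV[R]_n) :
  unit_ball x -> unit_ball y ->
  (Num.sqrt 2)^-1 <= barrlund_th_ratio x y <= Num.sqrt 2.
Proof.
move=> hx hy; have D_gt0 := hyp_denom_gt0 hx hy; have E_gt0 := sphere_energy_gt0 hx hy.
move: hx hy; rewrite /unit_ball /= => hx hy.
have a_ge0 := enorm_ge0 x; have b_ge0 := enorm_ge0 y.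
have tri := triangle x y; have s_ge0 := enorm_ge0 (x + y).
have ED := energy_le_twice_hyp a_ge0 hx b_ge0 hy s_ge0 tri.
have DE := hyp_le_twice_energy a_ge0 hx b_ge0 hy s_ge0 tri.
rewrite -parallelogram -/(hyp_denom x y) -/(sphere_energy x y) in ED DE.
rewrite /barrlund_th_ratio -sqrtrV // !ler_sqrt ?divr_ge0 ?(ltW D_gt0) ?(ltW E_gt0) //.
by rewrite ler_pdivrMr // ler_pdivlMr //; apply/andP; split; lra.
Qed.

Section Extremal.
Variables (R : realType) (n : nat) (i j : 'I_n).
Hypothesis ij : i != j.

Definition plane_vec (a b : R) : 'rV[R]_n := a *: delta_mx 0 i + b *: delta_mx 0 j.

Lemma plane_vecD a b c d : plane_vec a b + plane_vec c d = plane_vec (a + c) (b + d).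
Proof. by apply/rowP => k; rewrite !mxE; ring. Qed.

Lemma plane_vecB a b c d : plane_vec a b - plane_vec c d = plane_vec (a - c) (b - d).
Proof. by apply/rowP => k; rewrite !mxE; ring. Qed.

Lemma dot_delta (k l : 'I_n) :
  dot (delta_mx 0 k : 'rV[R]_n) (delta_mx 0 l) = (k == l)%:R.
Proof.
rewrite /dot (bigD1 k) //= big1 ?addr0; first by rewrite !mxE !eqxx mul1r eq_sym.
by move=> m /negPf km; rewrite !mxE km mul0r.
Qed.

Lemma enorm_plane_vec a b : enorm (plane_vec a b) = Num.sqrt (a ^+ 2 + b ^+ 2).
Proof.
rewrite enorm_dot /plane_vec !(dotDl, dotDr, dotZl, dotZr) !dot_delta.
by rewrite !eqxx (negPf ij) eq_sym (negPf ij) /=; congr Num.sqrt; ring.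
Qed.

Lemma sqnorm_plane_vec a b : enorm (plane_vec a b) ^+ 2 = a ^+ 2 + b ^+ 2.
Proof. by rewrite enorm_plane_vec sqr_sqrtr // addr_ge0 // sqr_ge0. Qed.

Lemma enorm_plane_vec_axis a : 0 <= a -> enorm (plane_vec a 0) = a.
Proof. by move=> a_ge0; rewrite enorm_plane_vec expr0n addr0 sqrtr_sqr ger0_norm. Qed.

Lemma plane_vec_in_ball a b : a ^+ 2 + b ^+ 2 < 1 -> unit_ball (plane_vec a b).
Proof. by move=> ab1; rewrite /unit_ball /= enorm_plane_vec -sqrtr1 ltr_sqrt. Qed.

Lemma radial_pair t : 0 < t < 1 ->
  let x := plane_vec t 0 in let y := plane_vec 0 0 in
  [/\ unit_ball x, unit_ball y, 0 < th_half_rho_ball x y &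
      hyp_denom x y / sphere_energy x y = (1 + (1 - t) ^+ 2)^-1].
Proof.
move=> /andP [t_gt0 t_lt1] x y.
have ex : enorm x = t by rewrite enorm_plane_vec_axis ?ltW.
have ey : enorm y = 0 by rewrite enorm_plane_vec_axis.
have exy : enorm (x + y) = t by rewrite plane_vecD !addr0 enorm_plane_vec_axis ?ltW.
have dxy : enorm (x - y) = t by rewrite plane_vecB !subr0 enorm_plane_vec_axis ?ltW.
have hx : unit_ball x by apply: plane_vec_in_ball; nra.
have hy : unit_ball y by apply: plane_vec_in_ball; rewrite expr0n addr0.
split => //; first by rewrite th_half_rho_ball_gt0 // dxy.
rewrite /hyp_denom /sphere_energy ex ey exy dxy.
by field; apply/negP => /eqP; nra.
Qed.

Lemma tangential_pair u : 0 < u < 1 ->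
  let x := plane_vec (1 - u) u in let y := plane_vec (1 - u) (- u) in
  [/\ unit_ball x, unit_ball y, 0 < th_half_rho_ball x y &
      hyp_denom x y / sphere_energy x y = 1 + (1 - u) ^+ 2].
Proof.
move=> /andP [u_gt0 u_lt1] x y.
have ex : enorm x ^+ 2 = (1 - u) ^+ 2 + u ^+ 2 by rewrite sqnorm_plane_vec.
have ey : enorm y ^+ 2 = (1 - u) ^+ 2 + u ^+ 2 by rewrite sqnorm_plane_vec sqrrN.
have exy : enorm (x + y) = 2 * (1 - u).
  rewrite plane_vecD addrN.
  have -> : 1 - u + (1 - u) = 2 * (1 - u) by ring.
  by rewrite enorm_plane_vec_axis //; lra.
have dxy : enorm (x - y) = 2 * u.
  rewrite plane_vecB subrr opprK enorm_plane_vec expr0n add0r.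
  by rewrite sqrtr_sqr ger0_norm //; lra.
have hx : unit_ball x by apply: plane_vec_in_ball; nra.
have hy : unit_ball y by apply: plane_vec_in_ball; rewrite sqrrN; nra.
split => //; first by rewrite th_half_rho_ball_gt0 // dxy; lra.
rewrite /hyp_denom /sphere_energy ex ey exy dxy.
by field; apply/negP => /eqP; nra.
Qed.

End Extremal.

Lemma near_two (R : realType) (r : R) : r < 2 ->
  exists t : R, 0 < t < 1 /\ r < 1 + (1 - t) ^+ 2.
Proof.
move=> r_lt2; have [r_le0|r_gt0] := lerP r 0.
  by exists (1 / 2); split; [apply/andP; split|]; nra.
exists ((2 - r) / 4); split; first by apply/andP; split; lra.
have := sqr_ge0 ((2 - r) / 4); nra.
Qed.

Lemma above_inv_sqrt2 (R : realType) (c : R) : (Num.sqrt 2)^-1 < c ->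
  exists t : R, 0 < t < 1 /\ Num.sqrt ((1 + (1 - t) ^+ 2)^-1) < c.
Proof.
have r2 : Num.sqrt 2 ^+ 2 = 2 :> R by rewrite sqr_sqrtr.
have r2_gt0 : 0 < Num.sqrt 2 :> R by rewrite sqrtr_gt0.
move=> c_gt; have c_gt0 : 0 < c by rewrite (lt_trans _ c_gt) ?invr_gt0.
have c_r2 : 1 < c * Num.sqrt 2 by rewrite -ltr_pdivrMr // mul1r.
have q_gt0 : 0 < c ^+ 2 by rewrite exprn_gt0.
have qVq : c ^+ 2 * (c ^+ 2)^-1 = 1 by rewrite mulfV ?gt_eqF.
have [t [t01 tc]] : exists t : R, 0 < t < 1 /\ (c ^+ 2)^-1 < 1 + (1 - t) ^+ 2.
  by apply: near_two; nra.
exists t; split => //.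
have A_gt0 : 0 < 1 + (1 - t) ^+ 2 by rewrite ltr_pwDl ?sqr_ge0.
rewrite -(ger0_norm (ltW c_gt0)) -sqrtr_sqr ltr_sqrt //.
by rewrite -div1r ltr_pdivrMr //; nra.
Qed.

Lemma below_sqrt2 (R : realType) (c : R) : c < Num.sqrt 2 ->
  exists u : R, 0 < u < 1 /\ c < Num.sqrt (1 + (1 - u) ^+ 2).
Proof.
move=> c_lt; have [c_le0|c_gt0] := lerP c 0.
  have [u [u01 _]] := near_two (ltr0Sn R 1).
  by exists u; split => //; rewrite (le_lt_trans c_le0) // sqrtr_gt0 ltr_pwDl ?sqr_ge0.
have [u [u01 uc]] : exists u : R, 0 < u < 1 /\ c ^+ 2 < 1 + (1 - u) ^+ 2.
  apply: near_two; have r2 : Num.sqrt 2 ^+ 2 = 2 :> R by rewrite sqr_sqrtr.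
  by rewrite -r2; nra.
exists u; split => //.
by rewrite -(ger0_norm (ltW c_gt0)) -sqrtr_sqr ltr_sqrt // (le_lt_trans (sqr_ge0 c)).
Qed.

Theorem corollary3p6 (R : realType) (n : nat) (hn : (2 <= n)%N) :
  (forall x y : 'rV[R]_n, unit_ball x -> unit_ball y ->
     th_half_rho_ball x y / Num.sqrt 2 <= barrlund (@unit_sphere R n) 2 x y
     /\ barrlund (@unit_sphere R n) 2 x y <= Num.sqrt 2 * th_half_rho_ball x y)
  /\ (forall c : R, (Num.sqrt 2)^-1 < c ->
        exists x y : 'rV[R]_n, [/\ unit_ball x, unit_ball y &
          barrlund (@unit_sphere R n) 2 x y < c * th_half_rho_ball x y])
  /\ (forall c : R, c < Num.sqrt 2 ->
        exists x y : 'rV[R]_n, [/\ unit_ball x, unit_ball y &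
          c * th_half_rho_ball x y < barrlund (@unit_sphere R n) 2 x y]).
Proof.
have n_gt0 : (0 < n)%N by apply: leq_trans hn.
pose e : 'I_n := Ordinal n_gt0; pose f : 'I_n := Ordinal hn.
have ef : e != f by [].
split; [|split].
- move=> x y hx hy; rewrite barrlund_ball_th //.
  have /andP [lo hi] := barrlund_th_ratio_bounds hx hy.
  have th_ge0 : 0 <= th_half_rho_ball x y by rewrite divr_ge0 ?enorm_ge0 ?sqrtr_ge0.
  by split; [rewrite [X in X <= _]mulrC|]; apply: ler_wpM2r.
- move=> c /above_inv_sqrt2 [t [t01 ratio_lt]].
  have [hx hy th_gt0 ratio] := radial_pair ef t01.
  exists (plane_vec e f t 0), (plane_vec e f 0 0); split => //.
  by rewrite barrlund_ball_th // ltr_pM2r // /barrlund_th_ratio ratio.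
- move=> c /below_sqrt2 [u [u01 ratio_gt]].
  have [hx hy th_gt0 ratio] := tangential_pair ef u01.
  exists (plane_vec e f (1 - u) u), (plane_vec e f (1 - u) (- u)); split => //.
  by rewrite barrlund_ball_th // ltr_pM2r // /barrlund_th_ratio ratio.
Qed.
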